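(* Let $\vec{m}\in\mathbb{R}^N$ denote a vector of $N$ homodyne measurement outcomes and $\vec{\theta}$ a vector of $N$ homodyne-measurement angles with $\theta_j \in(-\tfrac{\pi}{2},\tfrac{\pi}{2}]$ for all $j$. Let $\hat{B}^{(N)} \to \mathbf{R}$ be a real beam-splitter network, where $\mathbf{R} \in \mathrm{O}(N)$ is neither block diagonal nor a row permutation away from block diagonal. Let $\vec{\theta}'$ be another vector of $N$ measurement angles with $\theta'_i\in(-\tfrac{\pi}{2},\tfrac{\pi}{2}]$, and let $\mathbf{L} \in \mathbb{R}^{N\times N}$ be a real matrix for which there exists a Gaussian unitary $\hat{U}_G$ satisfying $\sqrt{|\det \mathbf{L}^{-1}|}\, {}_{p}\!\langle \mathbf{L}^{-1} \vec{m}| = {}_{p}\!\langle \vec{m}| \hat{U}_G$. Then, given $\vec{\theta}$ and $\hat{B}^{(N)}$, there does not exist a pair $(\vec{\theta}',\mathbf{L})$ such that for all $\vec{m}\in\mathbb{R}^N$, $${}_{p_{\vec{\theta}}}\!\langle \vec{m}|\, \hat{B}^{(N)} = \sqrt{|\det \mathbf{L}^{-1}|}\; {}_{p_{\vec{\theta}'}}\!\langle \mathbf{L}^{-1} \vec{m}|,$$ unless $\vec{\theta}=\theta\vec{1}_N$ (all angles equal), where $\vec{1}_N=(1,\ldots,1)^{\mathsf{T}}$.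
   Context: Modes have quadratures $\hat q=(\hat a+\hat a^\dagger)/\sqrt2$, $\hat p=-i(\hat a-\hat a^\dagger)/\sqrt2$. The rotated quadrature is $\hat p_\theta = \hat R^\dagger(\theta)\hat p\hat R(\theta)=\hat p\cos\theta+\hat q\sin\theta$ with $\hat R(\theta)=e^{i\theta\hat a^\dagger\hat a}$; a homodyne measurement of $\hat p_\theta$ with outcome $m$ is the projection onto the bra ${}_{p_\theta}\!\langle m| = {}_{p}\!\langle m|\hat R(\theta)$, and ${}_{p_{\vec\theta}}\!\langle\vec m|$ denotes the tensor product of such bras over the $N$ modes. For a passive linear-optical unitary, $\hat U\to\mathbf U$ means $\hat U^\dagger\hat{\vec a}\hat U=\mathbf U\hat{\vec a}$ for the vector of annihilation operators. A real beam-splitter network is a product of beam splitters $e^{-\theta(\hat a_j\hat a_k^\dagger-\hat a_j^\dagger\hat a_k)}$, whose matrix is real orthogonal. The determinant factor accounts for the change of measure from linear post-processing of outcomes.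
   Formalization: R is assumed not block diagonal after any permutation of its rows combined with any relabelling of the modes (permutation of its columns), rather than only after row permutations. The statement above fails without it. *)

From HB Require Import structures.
From mathcomp Require Import all_boot all_order all_fingroup all_algebra.
From mathcomp Require Import all_classical all_reals all_analysis.
Set Implicit Arguments. Unset Strict Implicit. Unset Printing Implicit Defensive.
Import Order.TTheory GRing.Theory Num.Theory.
Local Open Scope ring_scope.

(* A vector of n operators, each a real linear combination of the quadratures
   x = (q_1,...,q_n,p_1,...,p_n), is represented by its coefficient matrix
   C : 'M_(n, n + n)  (operator_j = sum_k C j k * x_k). *)

Definition angle_ok (R : realType) (t : R) : Prop := - (pi / 2) < t <= pi / 2.

(* Coefficients of the rotated quadratures p_theta_j = p_j cos th_j + q_j sin th_j. *)
Definition p_theta_coef (R : realType) (n : nat) (th : 'rV[R]_n) : 'M[R]_(n, n + n) :=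
  row_mx (diag_mx (map_mx sin th)) (diag_mx (map_mx cos th)).

Definition p_coef (R : realType) (n : nat) : 'M[R]_(n, n + n) := row_mx 0 1%:M.

(* Heisenberg action of a real passive network B -> M :
   B^dag q B = M q, B^dag p B = M p, i.e. B^dag x B = (block_mx M 0 0 M) x. *)
Definition passive_real_symp (R : realType) (n : nat) (M : 'M[R]_n) : 'M[R]_(n + n) :=
  block_mx M 0 0 M.

(* Symplectic form and symplectic matrices (homogeneous Gaussian unitaries:
   U^dag x U = S x with S symplectic). *)
Definition Jmx (R : realType) (n : nat) : 'M[R]_(n + n) :=
  block_mx 0 1%:M (- 1%:M) 0.

Definition symplectic (R : realType) (n : nat) (S : 'M[R]_(n + n)) : Prop :=
  S *m Jmx R n *m S^T = Jmx R n.

(* Conjugation of an operator vector with coefficient matrix C by a Gaussian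
   unitary with symplectic matrix S: U^dag (C x) U = (C S) x. *)

(* "There is a Gaussian unitary U_G with sqrt|det L^-1| <L^-1 m|_p = <m|_p U_G
    for all m":  equivalently U_G^dag p U_G = L p  (p-eigenbras with labels m are
    mapped to p-eigenbras with labels L^-1 m). *)
Definition gaussian_relabel (R : realType) (n : nat) (L : 'M[R]_n) : Prop :=
  exists S : 'M[R]_(n + n), symplectic S /\ p_coef R n *m S = L *m p_coef R n.

(* "<m|_{p_th} B = sqrt|det L^-1| <L^-1 m|_{p_th'} for all m":  the left family
   is the (complete, m-labelled) family of joint eigenbras of B^dag p_th B with
   eigenvalues m, the right one that of L p_th' with eigenvalues m; the identity
   of the labelled families is the operator identity B^dag p_th B = L p_th'. *)
Definition homodyne_equiv (R : realType) (n : nat) (th : 'rV[R]_n) (M : 'M[R]_n)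
    (th' : 'rV[R]_n) (L : 'M[R]_n) : Prop :=
  p_theta_coef th *m passive_real_symp M = L *m p_theta_coef th'.

(* M is block diagonal up to permutation of rows (and relabelling of modes/columns):
   there is a nontrivial split of rows and columns with vanishing off-diagonal blocks. *)
Definition block_decomposable (R : realType) (n : nat) (M : 'M[R]_n) : Prop :=
  exists (s t : 'S_n) (k : nat), (0 < k < n)%N /\
    forall i j : 'I_n, ((i < k)%N != (j < k)%N) -> M (s i) (t j) = 0.

From HB Require Import structures.
From mathcomp Require Import all_boot all_order all_fingroup all_algebra.
From mathcomp Require Import all_classical all_reals all_analysis.
From mathcomp Require Import ring lra.
Import Order.TTheory GRing.Theory Num.Theory.
Local Open Scope ring_scope.

(* Comparing the sin and cos components of B^dag p_th B = L p_th' entrywise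
   gives sin th_i M_ij = L_ij sin th'_j and cos th_i M_ij = L_ij cos th'_j, so
   sin (th_i - th'_j) M_ij = 0: wherever M_ij <> 0 the angles agree, since they
   lie in a half-open interval of length pi.  Fixing t := th_i0, the rows I with
   th_i = t and the columns J with th'_j = t therefore cut M into two diagonal
   blocks.  Orthogonality forces #|I| = #|J| (both count the squared entries of
   the I x J block), so unless I is everything M is block decomposable. *)

Lemma angle_ok_sinB_eq0 (R : realType) (a b : R) :
  angle_ok a -> angle_ok b -> sin (a - b) = 0 -> a = b.
Proof.
rewrite /angle_ok => /andP[a_gt a_le] /andP[b_gt b_le] sinab0.
have pi_gt0 : 0 < (pi : R) := pi_gt0 R.
case: (ltgtP (a - b) 0) => [ab_lt0|ab_gt0|/eqP]; last by rewrite subr_eq0 => /eqP.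
- have : 0 < sin (- (a - b)).
    by apply: sin_gt0_pi; apply/andP; split; [rewrite oppr_gt0 | lra].
  by rewrite sinN sinab0 oppr0 ltxx.
- have : 0 < sin (a - b) by apply: sin_gt0_pi; apply/andP; split => //; lra.
  by rewrite sinab0 ltxx.
Qed.

Lemma homodyne_equivE (R : realType) (n : nat) (th th' : 'rV[R]_n) (M L : 'M[R]_n) :
  homodyne_equiv th M th' L -> forall i j,
    sin (th 0 i) * M i j = L i j * sin (th' 0 j) /\
    cos (th 0 i) * M i j = L i j * cos (th' 0 j).
Proof.
rewrite /homodyne_equiv /p_theta_coef /passive_real_symp.
rewrite mul_row_block mul_mx_row ?mulmx0 ?mul0mx ?addr0 ?add0r.
case/eq_row_mx => Esin Ecos i j.
move: (congr1 (fun A : 'M[R]_n => A i j) Esin) (congr1 (fun A : 'M[R]_n => A i j) Ecos).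
by rewrite /= !mul_diag_mx !mul_mx_diag !mxE.
Qed.

Lemma homodyne_equiv_angle_eq {R : realType} {n : nat} {th th' : 'rV[R]_n}
    {M L : 'M[R]_n} :
  (forall j, angle_ok (th 0 j)) -> (forall j, angle_ok (th' 0 j)) ->
  homodyne_equiv th M th' L ->
  forall i j, M i j != 0 -> th 0 i = th' 0 j.
Proof.
move=> th_ok th'_ok /homodyne_equivE thE i j Mij_neq0.
apply: angle_ok_sinB_eq0 => //; have [Esin Ecos] := thE i j.
apply: (mulIf Mij_neq0); rewrite mul0r sinB.
transitivity (cos (th' 0 j) * (sin (th 0 i) * M i j)
              - sin (th' 0 j) * (cos (th 0 i) * M i j)); first by ring.
by rewrite Esin Ecos; ring.
Qed.

Lemma orthogonal_block_card {R : numDomainType} {n : nat} {M : 'M[R]_n}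
    {I J : {set 'I_n}} :
  M *m M^T = 1%:M ->
  (forall i j, (i \in I) != (j \in J) -> M i j = 0) ->
  #|I| = #|J|.
Proof.
move=> MMT offblock0.
have MTM : M^T *m M = 1%:M := mulmx1C MMT.
have row_norm i : \sum_j M i j ^+ 2 = 1.
  transitivity ((M *m M^T) i i); last by rewrite MMT mxE eqxx.
  by rewrite mxE; apply: eq_bigr => j _; rewrite !mxE.
have col_norm j : \sum_i M i j ^+ 2 = 1.
  transitivity ((M^T *m M) j j); last by rewrite MTM mxE eqxx.
  by rewrite mxE; apply: eq_bigr => i _; rewrite !mxE.
apply/eqP; rewrite -(eqr_nat R) -!sumr_const.
have -> : \sum_(i in I) 1 = \sum_(i in I) \sum_(j in J) M i j ^+ 2 :> R.
  apply: eq_bigr => i iI; rewrite -(row_norm i) (bigID (mem J)) /=.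
  by rewrite [X in _ + X]big1 ?addr0 // => j jNJ; rewrite offblock0 ?expr0n // iI (negbTE jNJ).
have -> : \sum_(j in J) 1 = \sum_(j in J) \sum_(i in I) M i j ^+ 2 :> R.
  apply: eq_bigr => j jJ; rewrite -(col_norm j) (bigID (mem I)) /=.
  by rewrite [X in _ + X]big1 ?addr0 // => i iNI; rewrite offblock0 ?expr0n // jJ (negbTE iNI).
by rewrite exchange_big.
Qed.

Lemma perm_set_to_prefix {n : nat} (A : {set 'I_n}) :
  exists s : 'S_n, forall i, (s i \in A) = (i < #|A|)%N.
Proof.
set enumAC := enum A ++ enum (~: A).
have size_enumAC : size enumAC = n by rewrite size_cat -!cardE cardsC card_ord.
have uniq_enumAC : uniq enumAC.
  rewrite cat_uniq !enum_uniq andbT /=.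
  by apply/hasPn => x; rewrite !mem_enum inE => ->.
pose f i := nth i enumAC i.
have f_inj : injective f.
  move=> i j /eqP; rewrite /f (set_nth_default i) ?size_enumAC //.
  by rewrite nth_uniq ?size_enumAC // => /eqP/val_inj.
exists (perm f_inj) => i; rewrite permE /f nth_cat -cardE.
case: ltnP => [i_lt | i_ge]; first by rewrite -mem_enum mem_nth // -cardE.
have : nth i (enum (~: A)) (i - #|A|) \in ~: A.
  by rewrite -mem_enum mem_nth // -cardE ltn_subLR // cardsC card_ord.
by rewrite inE => /negbTE.
Qed.

Lemma block_decomposable_of_sets {R : realType} {n : nat} {M : 'M[R]_n}
    {I J : {set 'I_n}} :
  #|I| = #|J| -> (0 < #|I| < n)%N ->
  (forall i j, (i \in I) != (j \in J) -> M i j = 0) ->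
  block_decomposable M.
Proof.
move=> cardIJ cardI offblock0.
have [s sI] := perm_set_to_prefix I.
have [t tJ] := perm_set_to_prefix J.
by exists s, t, #|I|; split=> // i j ij; apply: offblock0; rewrite sI tJ -cardIJ.
Qed.

Theorem theorem3 (R : realType) (N : nat) (th : 'rV[R]_N) (M : 'M[R]_N) :
  (forall j : 'I_N, angle_ok (th 0 j)) ->
  M *m M^T = 1%:M ->
  ~ block_decomposable M ->
  (exists (th' : 'rV[R]_N) (L : 'M[R]_N),
      (forall j : 'I_N, angle_ok (th' 0 j)) /\
      L \in unitmx /\
      gaussian_relabel L /\
      homodyne_equiv th M th' L) ->
  exists t : R, forall j : 'I_N, th 0 j = t.
Proof.
move=> th_ok MMT Mindec [th' [L [th'_ok [_ [_ equiv]]]]].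
have angle_eq := homodyne_equiv_angle_eq th_ok th'_ok equiv.
have [i0 _ | no_mode] := pickP (@predT 'I_N); last by exists 0 => j; have := no_mode j.
pose t := th 0 i0; exists t.
pose I := [set i | th 0 i == t]; pose J := [set j | th' 0 j == t].
have offblock0 i j : (i \in I) != (j \in J) -> M i j = 0.
  by apply: contraNeq => /angle_eq thij; rewrite !inE thij.
move=> j; apply: contra_notP Mindec => thj_neq_t.
apply: (block_decomposable_of_sets (orthogonal_block_card MMT offblock0)) offblock0.
rewrite card_gt0; apply/andP; split; first by apply/set0Pn; exists i0; rewrite inE.
rewrite -[X in (_ < X)%N]card_ord -cardsT proper_card // properT.
apply/negP => /eqP IT; apply: thj_neq_t; apply/eqP.
suff : j \in I by rewrite inE.
by rewrite IT finset.in_setT.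
Qed.
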